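(* Let $T_1,T_2>0$, $0<\tau<2\min(T_1,T_2)$, $\gamma>0$, and let $R_1=\tau/\sqrt2$, $R_2=R_1+\tau$, $c_0=(T_1+\tau/2+R_1,\,T_2+\tau/2+R_1)$. Define the regions of $\mathbb{R}^2$ (for $p=(p_1,p_2)$): $S_{1,\alpha}=\{T_1+\tfrac\tau2<p_1<T_1+\tfrac\tau2+R_1,\ T_2+\tfrac\tau2<p_2<T_2+\tfrac\tau2+R_1,\ \|p-c_0\|<R_1\}$, $S_{1,1}=\{T_1+\tfrac\tau2<p_1<T_1+\tfrac\tau2+R_1,\ p_2>T_2+\tfrac\tau2+R_1\}$, $S_{1,2}=\{T_2+\tfrac\tau2<p_2<T_2+\tfrac\tau2+R_1,\ p_1>T_1+\tfrac\tau2+R_1\}$, $S_{1,3}=\{p_1>T_1+\tfrac\tau2+R_1,\ p_2>T_2+\tfrac\tau2+R_1\}$, $S_{0,\alpha}=\{p_1\le T_1+\tfrac\tau2+R_1,\ p_2\le T_2+\tfrac\tau2+R_1,\ \|p-c_0\|>R_2\}$, $S_{0,1}=\{p_1\le T_1-\tfrac\tau2,\ p_2>T_2+\tfrac\tau2+R_1\}$, $S_{0,2}=\{p_2\le T_2-\tfrac\tau2,\ p_1>T_1+\tfrac\tau2+R_1\}$, $S_{\tau,\alpha}=\{p_1\le T_1+\tfrac\tau2+R_1,\ p_2\le T_2+\tfrac\tau2+R_1,\ R_1\le\|p-c_0\|\le R_2\}$, $S_{\tau,1}=\{T_1-\tfrac\tau2\le p_1\le T_1+\tfrac\tau2,\ p_2>T_2+\tfrac\tau2+R_1\}$,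 $S_{\tau,2}=\{T_2-\tfrac\tau2\le p_2\le T_2+\tfrac\tau2,\ p_1>T_1+\tfrac\tau2+R_1\}$, and $f_\tau=1$ on $S_{1,\alpha}\cup S_{1,1}\cup S_{1,2}\cup S_{1,3}$, $f_\tau=0$ on $S_{0,\alpha}\cup S_{0,1}\cup S_{0,2}$, $f_\tau(p)=\frac{R_2-\|p-c_0\|}{\tau}$ on $S_{\tau,\alpha}$, $f_\tau(p)=\frac{p_1-(T_1-\tau/2)}{\tau}$ on $S_{\tau,1}$, $f_\tau(p)=\frac{p_2-(T_2-\tau/2)}{\tau}$ on $S_{\tau,2}$. Let $g_E(x,x')=e^{\gamma\|x-x'\|}$ and let $B^*(z)=\sup_{w}\frac{\mathrm{L}_{f_\tau,\infty}(w)}{g_E(z,w)}$ be the $g_E$-smooth sensitivity of $f_\tau$. Then for $z=(z_1,z_2)$: $B^*(z)=\max\left(\frac{1}{T_1+\tau/2-z_1},\frac1\tau e^{-\gamma(T_1-\tau/2-z_1)}\right)$ for $z\in S_{0,1}$; $B^*(z)=\max\left(\frac{1}{T_2+\tau/2-z_2},\frac1\tau e^{-\gamma(T_2-\tau/2-z_2)}\right)$ for $z\in S_{0,2}$; $B^*(z)=\max\left(\frac{1}{\|z-c_0\|-R_1},\frac1\tau e^{-\gamma(\|z-c_0\|-R_2)}\right)$ for $z\in S_{0,\alpha}$; $B^*(z)=\max\left(\frac{1}{z_1-(T_1-\tau/2)},\frac1\tau e^{-\gamma(z_1-(T_1+\tau/2))}\right)$ for $z\in S_{1,1}$; $B^*(z)=\max\left(\frac{1}{z_2-(T_2-\tau/2)},\frac1\tau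 e^{-\gamma(z_2-(T_2+\tau/2))}\right)$ for $z\in S_{1,2}$; $B^*(z)=\max\left(\frac{1}{z_1-(T_1-\tau/2)},\frac1\tau e^{-\gamma(z_1-(T_1+\tau/2))},\frac{1}{z_2-(T_2-\tau/2)},\frac1\tau e^{-\gamma(z_2-(T_2+\tau/2))}\right)$ for $z\in S_{1,3}$; $B^*(z)=\max\left(\frac{1}{R_2-\|z-c_0\|},\frac1\tau e^{-\gamma(R_1-\|z-c_0\|)}\right)$ for $z\in S_{1,\alpha}$; $B^*(z)=\frac1\tau$ for $z\in S_{\tau,1}\cup S_{\tau,2}\cup S_{\tau,\alpha}$.
   Context: $\|\cdot\|$ is the Euclidean norm. $\mathrm{L}_{f,\infty}(w)$ is the infimum of all $K$ such that $|f(w)-f(w')|\le K\|w-w'\|$ for all $w'$ in the domain of $f$; the supremum defining $B^*$ ranges over the domain of $f_\tau$ (the union of the regions above). *)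

From Stdlib Require Import Reals Lra ClassicalEpsilon.
From Coquelicot Require Import Coquelicot.
Open Scope R_scope.

Definition pt := (R * R)%type.

Definition dist2 (p q : pt) : R :=
  sqrt ((fst p - fst q) ^ 2 + (snd p - snd q) ^ 2).

Section Regions.
Variables T1 T2 tau : R.

Definition Rad1 : R := tau / sqrt 2.
Definition Rad2 : R := Rad1 + tau.
Definition a1 : R := T1 + tau / 2 + Rad1.
Definition a2 : R := T2 + tau / 2 + Rad1.
Definition c0 : pt := (a1, a2).

Definition S1a (p : pt) : Prop :=
  T1 + tau/2 < fst p < a1 /\ T2 + tau/2 < snd p < a2 /\ dist2 p c0 < Rad1.
Definition S11 (p : pt) : Prop := T1 + tau/2 < fst p < a1 /\ snd p > a2.
Definition S12 (p : pt) : Prop := T2 + tau/2 < snd p < a2 /\ fst p > a1.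
Definition S13 (p : pt) : Prop := fst p > a1 /\ snd p > a2.
Definition S0a (p : pt) : Prop := fst p <= a1 /\ snd p <= a2 /\ dist2 p c0 > Rad2.
Definition S01 (p : pt) : Prop := fst p <= T1 - tau/2 /\ snd p > a2.
Definition S02 (p : pt) : Prop := snd p <= T2 - tau/2 /\ fst p > a1.
Definition Sta (p : pt) : Prop :=
  fst p <= a1 /\ snd p <= a2 /\ Rad1 <= dist2 p c0 <= Rad2.
Definition St1 (p : pt) : Prop := T1 - tau/2 <= fst p <= T1 + tau/2 /\ snd p > a2.
Definition St2 (p : pt) : Prop := T2 - tau/2 <= snd p <= T2 + tau/2 /\ fst p > a1.

Definition dom (p : pt) : Prop :=
  S1a p \/ S11 p \/ S12 p \/ S13 p \/ S0a p \/ S01 p \/ S02 p \/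
  Sta p \/ St1 p \/ St2 p.

Definition decP (P : Prop) : bool :=
  if excluded_middle_informative P then true else false.

(* f_tau; the value outside dom is irrelevant (never used) *)
Definition f_tau (p : pt) : R :=
  if decP (S1a p \/ S11 p \/ S12 p \/ S13 p) then 1
  else if decP (S0a p \/ S01 p \/ S02 p) then 0
  else if decP (Sta p) then (Rad2 - dist2 p c0) / tau
  else if decP (St1 p) then (fst p - (T1 - tau/2)) / tau
  else if decP (St2 p) then (snd p - (T2 - tau/2)) / tau
  else 0.
End Regions.

Definition Lip_at (dom : pt -> Prop) (f : pt -> R) (w : pt) : Rbar :=
  Rbar_glb (fun K : Rbar => exists k : R, K = Finite k /\
     forall w', dom w' -> Rabs (f w - f w') <= k * dist2 w w').

Definition gE (gamma : R) (x x' : pt) : R := exp (gamma * dist2 x x').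

Definition smooth_sens (dom : pt -> Prop) (f : pt -> R) (gamma : R) (z : pt)
  : Rbar :=
  Rbar_lub (fun r : Rbar => exists w, dom w /\
     r = Rbar_mult (Lip_at dom f w) (Finite (/ gE gamma z w))).

Definition Bstar (T1 T2 tau gamma : R) (z : pt) : Rbar :=
  smooth_sens (dom T1 T2 tau) (f_tau T1 T2 tau) gamma z.

From Stdlib Require Import Reals Lra ClassicalEpsilon.
From Coquelicot Require Import Coquelicot.
Open Scope R_scope.

(* On its domain f_tau = F o sd, where sd is the signed distance to the quadrant
   {p | c0 <= p} and F is the ramp equal to 1 up to R1, to 0 from R2 = R1 + tau on,
   and linear in between.  As sd is 1-Lipschitz, the local Lipschitz constant of
   f_tau at w is at most the steepest secant slope G(sd w) of F from sd w, so
   B*(z) <= sup_s G(s) exp(-gamma |s - sd z|).  On each interval where G is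
   1/(R2 - s) or 1/(s - R1) the quantity G(s) exp(-gamma |s - sd z|) is of the form
   exp(affine)/affine, which is quasi-convex, so the supremum is attained at s = sd z
   or at the edge R1 (resp. R2) of the linear part.  Conversely every z of the domain
   lies on a unit-speed line (horizontal, vertical, or a ray from c0) along which
   f_tau is exactly F of the arc length and sd z is the arc length of z, and the
   secants of F between z, R1 and R2 on that line attain the bound.  So B*(z) is a
   function of sd z alone, whose values on the regions are the stated formulas. *)

Lemma norm_pt (w : pt) : norm w = sqrt (fst w ^ 2 + snd w ^ 2).
Proof.
  change (norm w) with (sqrt (Rabs (fst w) ^ 2 + Rabs (snd w) ^ 2)).
  rewrite !pow2_abs. reflexivity.
Qed.

Lemma dist2_norm (p q : pt) : dist2 p q = norm (minus p q).
Proof. rewrite norm_pt. reflexivity. Qed.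

Lemma dist2_sym (p q : pt) : dist2 p q = dist2 q p.
Proof. unfold dist2. f_equal. ring. Qed.

Lemma dist2_fst_le (p q : pt) : Rabs (fst p - fst q) <= dist2 p q.
Proof.
  unfold dist2. rewrite <- (sqrt_pow2 (Rabs _)) by apply Rabs_pos. rewrite pow2_abs.
  apply sqrt_le_1_alt. pose proof (pow2_ge_0 (snd p - snd q)). lra.
Qed.

Lemma dist2_snd_le (p q : pt) : Rabs (snd p - snd q) <= dist2 p q.
Proof.
  unfold dist2. rewrite <- (sqrt_pow2 (Rabs _)) by apply Rabs_pos. rewrite pow2_abs.
  apply sqrt_le_1_alt. pose proof (pow2_ge_0 (fst p - fst q)). lra.
Qed.

Definition along (b v : pt) (s : R) : pt := (fst b - s * fst v, snd b - s * snd v).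

Lemma dist2_along (b v : pt) (s t : R) : fst v ^ 2 + snd v ^ 2 = 1 ->
  dist2 (along b v s) (along b v t) = Rabs (s - t).
Proof.
  intros hv. unfold dist2, along; simpl fst; simpl snd.
  replace ((fst b - s * fst v - (fst b - t * fst v)) ^ 2
           + (snd b - s * snd v - (snd b - t * snd v)) ^ 2)
    with ((s - t) ^ 2 * (fst v ^ 2 + snd v ^ 2)) by ring.
  rewrite hv, Rmult_1_r, <- (pow2_abs (s - t)). apply sqrt_pow2, Rabs_pos.
Qed.

Lemma Rbar_mult_le_Finite (x : Rbar) (k e : R) :
  0 < e -> Rbar_le x (Finite k) -> Rbar_le (Rbar_mult x (Finite e)) (Finite (k * e)).
Proof.
  intros he. destruct x as [l| |]; intros hx.
  - simpl in *. apply Rmult_le_compat_r; lra.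
  - contradiction.
  - rewrite (is_Rbar_mult_unique _ _ _ (is_Rbar_mult_m_infty_pos (Finite e) he)). exact I.
Qed.

Lemma Rbar_mult_ge_Finite (x : Rbar) (k e : R) :
  0 < e -> Rbar_le (Finite k) x -> Rbar_le (Finite (k * e)) (Rbar_mult x (Finite e)).
Proof.
  intros he. destruct x as [l| |]; intros hx.
  - simpl in *. apply Rmult_le_compat_r; lra.
  - rewrite (is_Rbar_mult_unique _ _ _ (is_Rbar_mult_p_infty_pos (Finite e) he)). exact I.
  - contradiction.
Qed.

Lemma Rbar_glb_correct (E : Rbar -> Prop) : Rbar_is_glb E (Rbar_glb E).
Proof. unfold Rbar_glb. destruct (Rbar_ex_glb E) as [l hl]. exact hl. Qed.

Lemma Rbar_lub_correct (E : Rbar -> Prop) : Rbar_is_lub E (Rbar_lub E).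
Proof. unfold Rbar_lub. destruct (Rbar_ex_lub E) as [l hl]. exact hl. Qed.

Lemma inv_gE (gamma : R) (z w : pt) : / gE gamma z w = exp (- gamma * dist2 z w).
Proof. unfold gE. rewrite <- exp_Ropp. f_equal. ring. Qed.

Section SmoothSensitivity.
Variables (dom : pt -> Prop) (f : pt -> R) (gamma : R).

Lemma Lip_at_le (w : pt) (k : R) :
  (forall w', dom w' -> Rabs (f w - f w') <= k * dist2 w w') ->
  Rbar_le (Lip_at dom f w) (Finite k).
Proof.
  intros hk. apply Rbar_glb_correct. exists k. split; auto.
Qed.

Lemma Lip_at_ge (w w' : pt) : dom w' -> 0 < dist2 w w' ->
  Rbar_le (Finite (Rabs (f w - f w') / dist2 w w')) (Lip_at dom f w).
Proof.
  intros hw' hd. apply Rbar_glb_correct. intros x [k [ex hk]]. subst x. simpl.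
  apply Rle_div_l; auto.
Qed.

Lemma smooth_sens_le (z : pt) (k : pt -> R) (V : R) :
  (forall w, dom w -> Rbar_le (Lip_at dom f w) (Finite (k w))) ->
  (forall w, dom w -> k w * exp (- gamma * dist2 z w) <= V) ->
  Rbar_le (smooth_sens dom f gamma z) (Finite V).
Proof.
  intros hL hV. apply Rbar_lub_correct. intros x [w [hw ->]].
  rewrite inv_gE. eapply Rbar_le_trans.
  - apply Rbar_mult_le_Finite; [apply exp_pos | apply hL, hw].
  - apply hV, hw.
Qed.

Lemma smooth_sens_ge (z w : pt) (c : R) : dom w ->
  Rbar_le (Finite c) (Lip_at dom f w) ->
  Rbar_le (Finite (c * exp (- gamma * dist2 z w))) (smooth_sens dom f gamma z).
Proof.
  intros hw hc. eapply Rbar_le_trans; [apply Rbar_mult_ge_Finite; [apply exp_pos | exact hc] |].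
  apply Rbar_lub_correct. exists w. rewrite inv_gE. auto.
Qed.

End SmoothSensitivity.

Lemma exp_le_mono (x y : R) : x <= y -> exp x <= exp y.
Proof. intros [h|<-]; [apply Rlt_le, exp_increasing, h | lra]. Qed.

Lemma exp_convex (t p q : R) : 0 <= t <= 1 ->
  exp ((1 - t) * p + t * q) <= (1 - t) * exp p + t * exp q.
Proof.
  intros ht. set (m := (1 - t) * p + t * q).
  assert (ep : exp p = exp m * exp (p - m)) by (rewrite <- exp_plus; f_equal; ring).
  assert (eq' : exp q = exp m * exp (q - m)) by (rewrite <- exp_plus; f_equal; ring).
  assert (hm : (1 - t) * (p - m) + t * (q - m) = 0) by (unfold m; ring).
  pose proof (exp_ineq1_le (p - m)). pose proof (exp_ineq1_le (q - m)).
  assert (1 <= (1 - t) * exp (p - m) + t * exp (q - m)) by nra.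
  pose proof (exp_pos m). rewrite ep, eq'. clearbody m. nra.
Qed.

Lemma exp_div_affine_le_max (t p q A B : R) : 0 <= t <= 1 -> 0 < A -> 0 < B ->
  exp ((1 - t) * p + t * q) / ((1 - t) * A + t * B) <= Rmax (exp p / A) (exp q / B).
Proof.
  intros ht hA hB. set (M := Rmax (exp p / A) (exp q / B)).
  assert (hp : exp p <= M * A) by (apply Rle_div_l; [lra | apply Rmax_l]).
  assert (hq : exp q <= M * B) by (apply Rle_div_l; [lra | apply Rmax_r]).
  apply Rle_div_l; [nra|]. eapply Rle_trans; [apply exp_convex, ht | nra].
Qed.

Section Ramp.
Variables r tau : R.
Hypothesis htau : 0 < tau.

Definition ramp (s : R) : R := Rmax 0 (Rmin tau (r + tau - s)) / tau.

(* The steepest secant of [ramp] from [s]: from a plateau it ends at the far end of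
   the linear part. *)
Definition ramp_slope (s : R) : R :=
  if Rlt_dec s r then 1 / (r + tau - s)
  else if Rle_dec s (r + tau) then 1 / tau
  else 1 / (s - r).

Lemma ramp_top (s : R) : s <= r -> ramp s = 1.
Proof.
  intros hs. unfold ramp. rewrite Rmin_left, Rmax_right by lra. field. lra.
Qed.

Lemma ramp_bottom (s : R) : r + tau <= s -> ramp s = 0.
Proof. intros hs. unfold ramp. rewrite Rmin_right, Rmax_left by lra. unfold Rdiv. ring. Qed.

Lemma ramp_linear (s : R) : r <= s <= r + tau -> ramp s = (r + tau - s) / tau.
Proof. intros hs. unfold ramp. rewrite Rmin_right, Rmax_right by lra. reflexivity. Qed.

Lemma ramp_reflect (s : R) : ramp (2 * r + tau - s) = 1 - ramp s.
Proof.
  unfold ramp. replace (r + tau - (2 * r + tau - s)) with (s - r) by ring.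
  assert (e : Rmax 0 (Rmin tau (s - r)) = tau - Rmax 0 (Rmin tau (r + tau - s))).
  { unfold Rmax, Rmin. repeat destruct Rle_dec; lra. }
  rewrite e. field. lra.
Qed.

Lemma ramp_slope_reflect (s : R) : ramp_slope (2 * r + tau - s) = ramp_slope s.
Proof.
  unfold ramp_slope.
  repeat destruct Rlt_dec; repeat destruct Rle_dec; try lra; f_equal; ring.
Qed.

Lemma ramp_slope_pos (s : R) : 0 < ramp_slope s.
Proof.
  unfold ramp_slope. repeat destruct Rlt_dec; repeat destruct Rle_dec;
  apply Rdiv_lt_0_compat; lra.
Qed.

Lemma ramp_slope_le (s : R) : ramp_slope s <= 1 / tau.
Proof.
  unfold ramp_slope, Rdiv. rewrite !Rmult_1_l.
  repeat destruct Rlt_dec; repeat destruct Rle_dec; try lra;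
  apply Rinv_le_contravar; lra.
Qed.

Lemma ramp_secant_linear (a b : R) : Rabs (ramp a - ramp b) <= 1 / tau * Rabs (a - b).
Proof.
  unfold ramp. replace (_ / tau - _ / tau) with
    (1 / tau * (Rmax 0 (Rmin tau (r + tau - a)) - Rmax 0 (Rmin tau (r + tau - b))))
    by (field; lra).
  rewrite Rabs_mult, (Rabs_pos_eq (1 / tau)) by (apply Rlt_le, Rdiv_lt_0_compat; lra).
  apply Rmult_le_compat_l; [apply Rlt_le, Rdiv_lt_0_compat; lra|].
  unfold Rmax, Rmin. repeat destruct Rle_dec; split_Rabs; lra.
Qed.

Lemma ramp_secant_top (a b : R) : a < r ->
  Rabs (ramp a - ramp b) <= 1 / (r + tau - a) * Rabs (a - b).
Proof.
  intros ha. rewrite ramp_top by lra.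
  replace (1 / (r + tau - a) * Rabs (a - b)) with (Rabs (a - b) / (r + tau - a)) by (field; lra).
  apply Rle_div_r; [lra|].
  destruct (Rle_dec b r) as [hb|hb]; [|destruct (Rle_dec b (r + tau)) as [hb'|hb']].
  - rewrite ramp_top, Rminus_diag, Rabs_R0 by lra. pose proof (Rabs_pos (a - b)). lra.
  - rewrite ramp_linear by lra.
    replace (1 - (r + tau - b) / tau) with ((b - r) / tau) by (field; lra).
    rewrite Rabs_pos_eq by (apply Rdiv_le_0_compat; lra).
    rewrite Rabs_left1 by lra.
    replace ((b - r) / tau * (r + tau - a)) with ((b - r) * (r + tau - a) / tau) by (field; lra).
    apply Rle_div_l; [lra|]. nra.
  - rewrite ramp_bottom, Rminus_0_r, Rabs_R1, Rabs_left1 by lra. lra.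
Qed.

Lemma ramp_secant_le (a b : R) : Rabs (ramp a - ramp b) <= ramp_slope a * Rabs (a - b).
Proof.
  unfold ramp_slope. destruct Rlt_dec as [h|h]; [apply ramp_secant_top, h|].
  destruct Rle_dec as [h'|h']; [apply ramp_secant_linear|].
  assert (ha : 2 * r + tau - a < r) by lra.
  pose proof (ramp_secant_top _ (2 * r + tau - b) ha) as hs.
  rewrite !ramp_reflect in hs.
  replace (1 - ramp a - (1 - ramp b)) with (- (ramp a - ramp b)) in hs by ring.
  replace (r + tau - (2 * r + tau - a)) with (a - r) in hs by ring.
  replace (2 * r + tau - a - (2 * r + tau - b)) with (- (a - b)) in hs by ring.
  rewrite !Rabs_Ropp in hs. exact hs.
Qed.

Variable gamma : R.
Hypothesis hgamma : 0 < gamma.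

Definition ramp_decay_top (s0 : R) : R :=
  Rmax (1 / (r + tau - s0)) (1 / tau * exp (- gamma * (r - s0))).

Definition ramp_decay_bottom (s0 : R) : R :=
  Rmax (1 / (s0 - r)) (1 / tau * exp (- gamma * (s0 - (r + tau)))).

Lemma slope_decay_le_inv_tau (s s0 : R) :
  ramp_slope s * exp (- gamma * Rabs (s - s0)) <= 1 / tau.
Proof.
  rewrite <- (Rmult_1_r (1 / tau)). apply Rmult_le_compat.
  - apply Rlt_le, ramp_slope_pos.
  - apply Rlt_le, exp_pos.
  - apply ramp_slope_le.
  - rewrite <- exp_0. apply exp_le_mono. pose proof (Rabs_pos (s - s0)). nra.
Qed.

Lemma slope_decay_le_top (s s0 : R) : s0 <= r ->
  ramp_slope s * exp (- gamma * Rabs (s - s0)) <= ramp_decay_top s0.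
Proof.
  intros hs0. unfold ramp_decay_top.
  destruct (Rle_dec r s) as [hs|hs].
  { eapply Rle_trans; [|apply Rmax_r]. apply Rmult_le_compat.
    - apply Rlt_le, ramp_slope_pos.
    - apply Rlt_le, exp_pos.
    - apply ramp_slope_le.
    - apply exp_le_mono. rewrite Rabs_pos_eq by lra. nra. }
  assert (e : ramp_slope s = 1 / (r + tau - s)).
  { unfold ramp_slope. destruct Rlt_dec; [reflexivity | lra]. }
  rewrite e. destruct (Rle_dec s s0) as [hs'|hs'].
  { eapply Rle_trans; [|apply Rmax_l]. rewrite <- (Rmult_1_r (1 / (r + tau - s0))).
    apply Rmult_le_compat.
    - apply Rlt_le, Rdiv_lt_0_compat; lra.
    - apply Rlt_le, exp_pos.
    - unfold Rdiv. rewrite !Rmult_1_l. apply Rinv_le_contravar; lra.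
    - rewrite <- exp_0. apply exp_le_mono. pose proof (Rabs_pos (s - s0)). nra. }
  set (t := (s - s0) / (r - s0)).
  assert (ht : 0 <= t <= 1).
  { unfold t. split; [apply Rdiv_le_0_compat; lra | apply Rle_div_l; lra]. }
  pose proof (exp_div_affine_le_max t 0 (- gamma * (r - s0)) (r + tau - s0) tau ht
    ltac:(lra) htau) as h.
  replace ((1 - t) * 0 + t * (- gamma * (r - s0))) with (- gamma * Rabs (s - s0)) in h
    by (rewrite Rabs_pos_eq by lra; unfold t; field; lra).
  replace ((1 - t) * (r + tau - s0) + t * tau) with (r + tau - s) in h
    by (unfold t; field; lra).
  rewrite exp_0 in h. unfold Rdiv in *. rewrite !Rmult_1_l in *.
  rewrite !(Rmult_comm (/ _)). exact h.
Qed.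

Lemma slope_decay_le_bottom (s s0 : R) : r + tau <= s0 ->
  ramp_slope s * exp (- gamma * Rabs (s - s0)) <= ramp_decay_bottom s0.
Proof.
  intros hs0. rewrite <- ramp_slope_reflect.
  replace (s - s0) with (- ((2 * r + tau - s) - (2 * r + tau - s0))) by ring.
  rewrite Rabs_Ropp. eapply Rle_trans; [apply slope_decay_le_top; lra|].
  unfold ramp_decay_top, ramp_decay_bottom.
  replace (r + tau - (2 * r + tau - s0)) with (s0 - r) by ring.
  replace (r - (2 * r + tau - s0)) with (s0 - (r + tau)) by ring. lra.
Qed.

(* The value of [sup_s ramp_slope s * exp (- gamma * |s - s0|)], attained at [s = s0]
   or at an end of the linear part. *)
Definition ramp_smooth_sens (s0 : R) : R :=
  if Rlt_dec s0 r then ramp_decay_top s0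
  else if Rle_dec s0 (r + tau) then 1 / tau
  else ramp_decay_bottom s0.

Lemma ramp_smooth_sens_top (s0 : R) : s0 <= r -> ramp_smooth_sens s0 = ramp_decay_top s0.
Proof.
  intros hs0. unfold ramp_smooth_sens, ramp_decay_top.
  destruct Rlt_dec; [reflexivity|]. replace s0 with r by lra.
  rewrite Rminus_diag, Rmult_0_r, exp_0, Rmult_1_r.
  destruct Rle_dec; [|lra]. replace (r + tau - r) with tau by ring. symmetry. apply Rmax_left. lra.
Qed.

Lemma ramp_smooth_sens_bottom (s0 : R) : r + tau <= s0 ->
  ramp_smooth_sens s0 = ramp_decay_bottom s0.
Proof.
  intros hs0. unfold ramp_smooth_sens, ramp_decay_bottom.
  destruct Rlt_dec; [lra|]. destruct Rle_dec; [|reflexivity]. replace s0 with (r + tau) by lra.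
  rewrite Rminus_diag, Rmult_0_r, exp_0, Rmult_1_r.
  replace (r + tau - r) with tau by ring. symmetry. apply Rmax_left. lra.
Qed.

Lemma ramp_smooth_sens_linear (s0 : R) : r <= s0 <= r + tau -> ramp_smooth_sens s0 = 1 / tau.
Proof.
  intros hs0. destruct (Req_dec s0 r) as [->|hr].
  - rewrite ramp_smooth_sens_top by lra. unfold ramp_decay_top.
    rewrite Rminus_diag, Rmult_0_r, exp_0, Rmult_1_r.
    replace (r + tau - r) with tau by ring. apply Rmax_left. lra.
  - unfold ramp_smooth_sens. destruct Rlt_dec; [lra|]. destruct Rle_dec; [reflexivity | lra].
Qed.

Lemma ramp_decay_top_Rmax (x y : R) : x < r + tau -> y < r + tau ->
  ramp_decay_top (Rmax x y) = Rmax (ramp_decay_top x) (ramp_decay_top y).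
Proof.
  intros hx hy.
  assert (mono : forall u v, u <= v < r + tau -> ramp_decay_top u <= ramp_decay_top v).
  { intros u v huv. unfold ramp_decay_top, Rdiv. apply Rmax_le_compat.
    - rewrite !Rmult_1_l. apply Rinv_le_contravar; lra.
    - apply Rmult_le_compat_l; [rewrite Rmult_1_l; apply Rlt_le, Rinv_0_lt_compat; lra|].
      apply exp_le_mono. nra. }
  unfold Rmax at 1. destruct Rle_dec.
  - rewrite Rmax_right; [reflexivity | apply mono; lra].
  - rewrite Rmax_left; [reflexivity | apply mono; lra].
Qed.

End Ramp.

Section RampProfile.
Variables (dom : pt -> Prop) (f : pt -> R) (gamma r tau : R) (phi : pt -> R) (P : R -> pt).
Hypotheses (htau : 0 < tau) (hgamma : 0 < gamma).
Hypothesis f_ramp : forall p, dom p -> f p = ramp r tau (phi p).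
Hypothesis phi_lip : forall p q, Rabs (phi p - phi q) <= dist2 p q.
Hypothesis P_isometry : forall s t, dist2 (P s) (P t) = Rabs (s - t).

Lemma smooth_sens_le_slope_decay (z : pt) (V : R) :
  (forall s, ramp_slope r tau s * exp (- gamma * Rabs (s - phi z)) <= V) ->
  Rbar_le (smooth_sens dom f gamma z) (Finite V).
Proof.
  intros hV. apply smooth_sens_le with (k := fun w => ramp_slope r tau (phi w)).
  - intros w hw. apply Lip_at_le. intros w' hw'. rewrite !f_ramp by assumption.
    eapply Rle_trans; [apply ramp_secant_le, htau|].
    apply Rmult_le_compat_l; [apply Rlt_le, ramp_slope_pos, htau | apply phi_lip].
  - intros w _. eapply Rle_trans; [|apply (hV (phi w))].
    apply Rmult_le_compat_l; [apply Rlt_le, ramp_slope_pos, htau|].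
    apply exp_le_mono. rewrite Rabs_minus_sym. pose proof (phi_lip z w). nra.
Qed.

Definition follows_ramp (s : R) : Prop := dom (P s) /\ f (P s) = ramp r tau s.

Lemma smooth_sens_ge_secant (s0 s t : R) : follows_ramp s -> follows_ramp t -> s <> t ->
  Rbar_le (Finite (Rabs (ramp r tau s - ramp r tau t) / Rabs (s - t)
                   * exp (- gamma * Rabs (s0 - s))))
          (smooth_sens dom f gamma (P s0)).
Proof.
  intros [hs fs] [ht ft] hst. rewrite <- fs, <- ft, <- (P_isometry s t), <- (P_isometry s0 s).
  apply smooth_sens_ge; [exact hs|]. apply Lip_at_ge; [exact ht|].
  rewrite P_isometry. apply Rabs_pos_lt. lra.
Qed.

Lemma smooth_sens_ge_top (s0 : R) : s0 <= r ->
  follows_ramp s0 -> follows_ramp r -> follows_ramp (r + tau) ->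
  Rbar_le (Finite (ramp_decay_top r tau gamma s0)) (smooth_sens dom f gamma (P s0)).
Proof.
  intros hs0 h0 hr hrt. unfold ramp_decay_top. apply Rmax_case.
  - eapply Rbar_le_trans; [|apply (smooth_sens_ge_secant s0 s0 (r + tau)); auto; lra].
    simpl. right. rewrite ramp_top, ramp_bottom by lra.
    rewrite Rminus_diag, Rabs_R0, Rmult_0_r, exp_0, Rminus_0_r, Rabs_R1, Rabs_left by lra.
    field. lra.
  - eapply Rbar_le_trans; [|apply (smooth_sens_ge_secant s0 r (r + tau)); auto; lra].
    simpl. right. rewrite ramp_top, ramp_bottom by lra.
    rewrite Rminus_0_r, Rabs_R1, (Rabs_left (r - _)), (Rabs_left1 (s0 - r)) by lra.
    replace (- (r - (r + tau))) with tau by ring. replace (- (s0 - r)) with (r - s0) by ring.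
    field. lra.
Qed.

Lemma smooth_sens_ge_bottom (s0 : R) : r + tau <= s0 ->
  follows_ramp s0 -> follows_ramp r -> follows_ramp (r + tau) ->
  Rbar_le (Finite (ramp_decay_bottom r tau gamma s0)) (smooth_sens dom f gamma (P s0)).
Proof.
  intros hs0 h0 hr hrt. unfold ramp_decay_bottom. apply Rmax_case.
  - eapply Rbar_le_trans; [|apply (smooth_sens_ge_secant s0 s0 r); auto; lra].
    simpl. right. rewrite ramp_bottom with (s := s0), ramp_top with (s := r) by lra.
    rewrite Rminus_diag, Rabs_R0, Rmult_0_r, exp_0, Rabs_minus_sym, Rminus_0_r, Rabs_R1,
      (Rabs_pos_eq (s0 - r)) by lra.
    field. lra.
  - eapply Rbar_le_trans; [|apply (smooth_sens_ge_secant s0 (r + tau) r); auto; lra].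
    simpl. right. rewrite ramp_bottom with (s := r + tau), ramp_top with (s := r) by lra.
    rewrite Rabs_minus_sym, Rminus_0_r, Rabs_R1, (Rabs_pos_eq (r + tau - r)),
      (Rabs_pos_eq (s0 - _)) by lra.
    replace (r + tau - r) with tau by ring. field. lra.
Qed.

Lemma smooth_sens_ge_linear (s0 : R) : r <= s0 <= r + tau ->
  follows_ramp s0 -> follows_ramp r -> follows_ramp (r + tau) ->
  Rbar_le (Finite (1 / tau)) (smooth_sens dom f gamma (P s0)).
Proof.
  intros hs0 h0 hr hrt. destruct (Req_dec s0 (r + tau)) as [e|ne].
  - eapply Rbar_le_trans; [|apply (smooth_sens_ge_secant s0 s0 r); auto; lra].
    simpl. right. rewrite ramp_bottom with (s := s0), ramp_top with (s := r) by lra.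
    rewrite Rminus_diag, Rabs_R0, Rmult_0_r, exp_0, Rabs_minus_sym, Rminus_0_r, Rabs_R1,
      Rabs_pos_eq by lra.
    rewrite e. field. lra.
  - eapply Rbar_le_trans; [|apply (smooth_sens_ge_secant s0 s0 (r + tau)); auto; lra].
    simpl. right. rewrite ramp_linear, ramp_bottom by lra.
    rewrite Rminus_diag, Rabs_R0, Rmult_0_r, exp_0, Rminus_0_r, (Rabs_left (s0 - _)) by lra.
    rewrite Rabs_pos_eq by (apply Rdiv_le_0_compat; lra).
    field. lra.
Qed.

Lemma smooth_sens_eq_ramp (s0 : R) : phi (P s0) = s0 ->
  follows_ramp s0 -> follows_ramp r -> follows_ramp (r + tau) ->
  smooth_sens dom f gamma (P s0) = Finite (ramp_smooth_sens r tau gamma s0).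
Proof.
  intros hphi h0 hr hrt.
  assert (upper : forall V, (forall s, ramp_slope r tau s * exp (- gamma * Rabs (s - s0)) <= V) ->
                            Rbar_le (smooth_sens dom f gamma (P s0)) (Finite V)).
  { intros V hV. apply smooth_sens_le_slope_decay. rewrite hphi. exact hV. }
  destruct (Rle_dec s0 r) as [h1|h1]; [|destruct (Rle_dec s0 (r + tau)) as [h2|h2]].
  - rewrite ramp_smooth_sens_top by assumption. apply Rbar_le_antisym.
    + apply upper. intros s. apply slope_decay_le_top; assumption.
    + apply smooth_sens_ge_top; assumption.
  - rewrite ramp_smooth_sens_linear by lra. apply Rbar_le_antisym.
    + apply upper. intros s. apply slope_decay_le_inv_tau; assumption.
    + apply smooth_sens_ge_linear; auto; lra.
  - rewrite ramp_smooth_sens_bottom by lra. apply Rbar_le_antisym.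
    + apply upper. intros s. apply slope_decay_le_bottom; auto; lra.
    + apply smooth_sens_ge_bottom; auto; lra.
Qed.

End RampProfile.

Lemma sqr_le_of_Rabs_le (a b : R) : Rabs a <= Rabs b -> a ^ 2 <= b ^ 2.
Proof.
  intros h. rewrite <- (pow2_abs a), <- (pow2_abs b).
  apply pow_incr. split; [apply Rabs_pos | exact h].
Qed.

Definition ppart (x : R) : R := Rmax x 0.

Lemma ppart_lipschitz (x y : R) : Rabs (ppart x - ppart y) <= Rabs (x - y).
Proof. unfold ppart, Rmax. repeat destruct Rle_dec; split_Rabs; lra. Qed.

(* Distance from [p] to the closed quadrant [Q b = {q | fst b <= fst q, snd b <= snd q}],
   and distance from [p] to the complement of [Q b]; their difference is the signed
   distance to [Q b]. *)
Definition quadrant_dist (b p : pt) : R :=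
  sqrt (ppart (fst b - fst p) ^ 2 + ppart (snd b - snd p) ^ 2).

Definition quadrant_depth (b p : pt) : R := ppart (Rmin (fst p - fst b) (snd p - snd b)).

Definition quadrant_sdist (b p : pt) : R := quadrant_dist b p - quadrant_depth b p.

Section Quadrant.
Variable b : pt.

Lemma quadrant_dist_lipschitz (p q : pt) :
  Rabs (quadrant_dist b p - quadrant_dist b q) <= dist2 p q.
Proof.
  set (u := (ppart (fst b - fst p), ppart (snd b - snd p)) : pt).
  set (v := (ppart (fst b - fst q), ppart (snd b - snd q)) : pt).
  replace (quadrant_dist b p) with (norm u) by (rewrite norm_pt; reflexivity).
  replace (quadrant_dist b q) with (norm v) by (rewrite norm_pt; reflexivity).
  eapply Rle_trans; [apply norm_triangle_inv|]. rewrite <- dist2_norm.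
  unfold dist2. apply sqrt_le_1_alt. unfold u, v; simpl.
  pose proof (sqr_le_of_Rabs_le _ _ (ppart_lipschitz (fst b - fst p) (fst b - fst q))).
  pose proof (sqr_le_of_Rabs_le _ _ (ppart_lipschitz (snd b - snd p) (snd b - snd q))).
  replace ((fst b - fst p - (fst b - fst q)) ^ 2) with ((fst p - fst q) ^ 2) in * by ring.
  replace ((snd b - snd p - (snd b - snd q)) ^ 2) with ((snd p - snd q) ^ 2) in * by ring.
  lra.
Qed.

Lemma quadrant_depth_lipschitz (p q : pt) :
  Rabs (quadrant_depth b p - quadrant_depth b q) <= dist2 p q.
Proof.
  eapply Rle_trans; [apply ppart_lipschitz|].
  pose proof (dist2_fst_le p q). pose proof (dist2_snd_le p q).
  unfold Rmin. repeat destruct Rle_dec; split_Rabs; lra.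
Qed.

Lemma quadrant_depth_outside (p : pt) :
  fst p <= fst b \/ snd p <= snd b -> quadrant_depth b p = 0.
Proof. intros h. unfold quadrant_depth, ppart, Rmax, Rmin. repeat destruct Rle_dec; lra. Qed.

Lemma quadrant_depth_inside (p : pt) : fst b <= fst p -> snd b <= snd p ->
  quadrant_depth b p = Rmin (fst p - fst b) (snd p - snd b).
Proof. intros h1 h2. unfold quadrant_depth, ppart, Rmax, Rmin. repeat destruct Rle_dec; lra. Qed.

Lemma quadrant_dist_inside (p : pt) : fst b <= fst p -> snd b <= snd p ->
  quadrant_dist b p = 0.
Proof.
  intros h1 h2. unfold quadrant_dist, ppart.
  rewrite !Rmax_right by lra. replace (0 ^ 2 + 0 ^ 2) with 0 by ring. apply sqrt_0.
Qed.

Lemma quadrant_dist_depth_le (p q : pt) : fst p <= fst b \/ snd p <= snd b ->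
  fst b <= fst q -> snd b <= snd q ->
  quadrant_dist b p + quadrant_depth b q <= dist2 p q.
Proof.
  intros hp hq1 hq2. rewrite quadrant_depth_inside by assumption.
  unfold quadrant_dist, dist2, ppart.
  set (m := Rmin (fst q - fst b) (snd q - snd b)).
  assert (hm : 0 <= m /\ m <= fst q - fst b /\ m <= snd q - snd b)
    by (unfold m, Rmin; destruct Rle_dec; lra).
  pose proof (pow2_ge_0 (fst p - fst q)). pose proof (pow2_ge_0 (snd p - snd q)).
  (* on each coordinate where [p] lies outside, [q] is at least [m] further away than [b] *)
  destruct (Rle_dec (fst p) (fst b)) as [h1|h1]; destruct (Rle_dec (snd p) (snd b)) as [h2|h2].
  - rewrite !Rmax_left by lra.
    set (A := fst b - fst p). set (B := snd b - snd p).
    pose proof (sqrt_pos (A ^ 2 + B ^ 2)) as hN0.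
    pose proof (pow2_sqrt (A ^ 2 + B ^ 2) ltac:(nra)) as hN2.
    set (N := sqrt (A ^ 2 + B ^ 2)) in *.
    rewrite <- (sqrt_pow2 (N + m)) by lra. apply sqrt_le_1_alt.
    assert (N <= A + B) by (unfold A, B in *; nra).
    assert ((m + A) ^ 2 <= (fst p - fst q) ^ 2) by (unfold A; nra).
    assert ((m + B) ^ 2 <= (snd p - snd q) ^ 2) by (unfold B; nra).
    nra.
  - rewrite Rmax_left, (Rmax_right (snd b - snd p)) by lra.
    replace ((fst b - fst p) ^ 2 + 0 ^ 2) with ((fst b - fst p) ^ 2) by ring.
    rewrite sqrt_pow2 by lra.
    rewrite <- (sqrt_pow2 (fst b - fst p + m)) by lra. apply sqrt_le_1_alt. nra.
  - rewrite Rmax_right, (Rmax_left (snd b - snd p)) by lra.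
    replace (0 ^ 2 + (snd b - snd p) ^ 2) with ((snd b - snd p) ^ 2) by ring.
    rewrite sqrt_pow2 by lra.
    rewrite <- (sqrt_pow2 (snd b - snd p + m)) by lra. apply sqrt_le_1_alt. nra.
  - lra.
Qed.

Lemma quadrant_sdist_lipschitz (p q : pt) :
  Rabs (quadrant_sdist b p - quadrant_sdist b q) <= dist2 p q.
Proof.
  assert (cases : forall w : pt, (fst w <= fst b \/ snd w <= snd b) \/
                                 (fst b <= fst w /\ snd b <= snd w)).
  { intros w. destruct (Rle_dec (fst w) (fst b)); destruct (Rle_dec (snd w) (snd b)); lra. }
  unfold quadrant_sdist.
  destruct (cases p) as [hp|[hp1 hp2]]; destruct (cases q) as [hq|[hq1 hq2]].
  - rewrite !quadrant_depth_outside by assumption.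
    rewrite !Rminus_0_r. apply quadrant_dist_lipschitz.
  - rewrite (quadrant_depth_outside p), (quadrant_dist_inside q) by assumption.
    pose proof (quadrant_dist_depth_le p q hp hq1 hq2).
    assert (0 <= quadrant_dist b p) by apply sqrt_pos.
    assert (0 <= quadrant_depth b q) by apply Rmax_r.
    split_Rabs; lra.
  - rewrite (quadrant_dist_inside p), (quadrant_depth_outside q) by assumption.
    pose proof (quadrant_dist_depth_le q p hq hp1 hp2). rewrite dist2_sym.
    assert (0 <= quadrant_dist b q) by apply sqrt_pos.
    assert (0 <= quadrant_depth b p) by apply Rmax_r.
    split_Rabs; lra.
  - rewrite !quadrant_dist_inside by assumption.
    replace (0 - quadrant_depth b p - (0 - quadrant_depth b q))
      with (quadrant_depth b q - quadrant_depth b p) by ring.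
    rewrite dist2_sym. apply quadrant_depth_lipschitz.
Qed.

Lemma quadrant_sdist_lower_left (p : pt) : fst p <= fst b -> snd p <= snd b ->
  quadrant_sdist b p = dist2 p b.
Proof.
  intros h1 h2. unfold quadrant_sdist. rewrite quadrant_depth_outside by lra.
  unfold quadrant_dist, dist2, ppart. rewrite !Rmax_left by lra.
  rewrite Rminus_0_r. f_equal. ring.
Qed.

Lemma quadrant_sdist_left (p : pt) : fst p <= fst b -> snd b <= snd p ->
  quadrant_sdist b p = fst b - fst p.
Proof.
  intros h1 h2. unfold quadrant_sdist. rewrite quadrant_depth_outside by lra.
  unfold quadrant_dist, ppart. rewrite Rmax_left, (Rmax_right (snd b - snd p)) by lra.
  replace ((fst b - fst p) ^ 2 + 0 ^ 2) with ((fst b - fst p) ^ 2) by ring.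
  rewrite sqrt_pow2 by lra. ring.
Qed.

Lemma quadrant_sdist_below (p : pt) : fst b <= fst p -> snd p <= snd b ->
  quadrant_sdist b p = snd b - snd p.
Proof.
  intros h1 h2. unfold quadrant_sdist. rewrite quadrant_depth_outside by lra.
  unfold quadrant_dist, ppart. rewrite Rmax_right, (Rmax_left (snd b - snd p)) by lra.
  replace (0 ^ 2 + (snd b - snd p) ^ 2) with ((snd b - snd p) ^ 2) by ring.
  rewrite sqrt_pow2 by lra. ring.
Qed.

Lemma quadrant_sdist_inside (p : pt) : fst b <= fst p -> snd b <= snd p ->
  quadrant_sdist b p = Rmax (fst b - fst p) (snd b - snd p).
Proof.
  intros h1 h2. unfold quadrant_sdist.
  rewrite quadrant_dist_inside, quadrant_depth_inside by assumption.
  unfold Rmax, Rmin. repeat destruct Rle_dec; lra.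
Qed.

End Quadrant.

Section Ray.
Variables b z : pt.
Hypothesis hzb : 0 < dist2 z b.

Definition ray_dir : pt := ((fst b - fst z) / dist2 z b, (snd b - snd z) / dist2 z b).

Lemma ray_dir_unit : fst ray_dir ^ 2 + snd ray_dir ^ 2 = 1.
Proof.
  unfold ray_dir; simpl.
  pose proof (pow2_sqrt ((fst z - fst b) ^ 2 + (snd z - snd b) ^ 2)
    ltac:(pose proof (pow2_ge_0 (fst z - fst b)); pose proof (pow2_ge_0 (snd z - snd b)); lra))
    as hd.
  fold (dist2 z b) in hd. field_simplify; [|lra]. rewrite hd. field. nra.
Qed.

Lemma along_ray_dist : along b ray_dir (dist2 z b) = z.
Proof.
  unfold along, ray_dir; simpl. destruct z as [z1 z2]; simpl.
  f_equal; field; lra.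
Qed.

Lemma dist2_along_ray_centre (s : R) : 0 <= s -> dist2 (along b ray_dir s) b = s.
Proof.
  intros hs. replace b with (along b ray_dir 0) at 2
    by (unfold along; destruct b; simpl; f_equal; ring).
  rewrite dist2_along by apply ray_dir_unit. rewrite Rminus_0_r. apply Rabs_pos_eq, hs.
Qed.

Lemma along_ray_lower_left (s : R) : fst z <= fst b -> snd z <= snd b -> 0 <= s ->
  fst (along b ray_dir s) <= fst b /\ snd (along b ray_dir s) <= snd b.
Proof.
  intros h1 h2 hs. unfold along, ray_dir; simpl.
  assert (0 <= s / dist2 z b) by (apply Rdiv_le_0_compat; lra).
  replace (s * ((fst b - fst z) / dist2 z b)) with (s / dist2 z b * (fst b - fst z))
    by (field; lra).
  replace (s * ((snd b - snd z) / dist2 z b)) with (s / dist2 z b * (snd b - snd z))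
    by (field; lra).
  split; nra.
Qed.

End Ray.

Section Regions.
Variables T1 T2 tau gamma : R.
Hypotheses (htau : 0 < tau) (hgamma : 0 < gamma).

Local Notation sd := (quadrant_sdist (c0 T1 T2 tau)).
Local Notation follows := (follows_ramp (dom T1 T2 tau) (f_tau T1 T2 tau) (Rad1 tau) tau).
Local Notation ramp_sens := (ramp_smooth_sens (Rad1 tau) tau gamma).

Lemma Rad1_pos : 0 < Rad1 tau.
Proof. apply Rdiv_lt_0_compat; [exact htau | apply sqrt_lt_R0; lra]. Qed.

Local Ltac centre_facts :=
  pose proof Rad1_pos;
  assert (a1 T1 tau = T1 + tau / 2 + Rad1 tau) by reflexivity;
  assert (a2 T2 tau = T2 + tau / 2 + Rad1 tau) by reflexivity;
  assert (Rad2 tau = Rad1 tau + tau) by reflexivity.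

Lemma f_tau_ramp (p : pt) : dom T1 T2 tau p -> f_tau T1 T2 tau p = ramp (Rad1 tau) tau (sd p).
Proof.
  (* each branch of [f_tau] agrees with the ramp on its own regions, so the overlaps
     between regions never matter *)
  intros hp. centre_facts. unfold f_tau, decP.
  destruct (excluded_middle_informative _) as [h|n1].
  { symmetry. apply ramp_top; [exact htau|].
    unfold S1a, S11, S12, S13 in h. destruct p as [p1 p2]; simpl in h.
    destruct h as [(h1 & h2 & h3) | [(h1 & h2) | [(h1 & h2) | (h1 & h2)]]].
    - rewrite quadrant_sdist_lower_left by (simpl; lra). lra.
    - rewrite quadrant_sdist_left by (simpl; lra). simpl. lra.
    - rewrite quadrant_sdist_below by (simpl; lra). simpl. lra.
    - rewrite quadrant_sdist_inside by (simpl; lra). simpl. apply Rmax_lub; lra. }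
  destruct (excluded_middle_informative _) as [h|n2].
  { symmetry. apply ramp_bottom; [exact htau|].
    unfold S0a, S01, S02 in h. destruct p as [p1 p2]; simpl in h.
    destruct h as [(h1 & h2 & h3) | [(h1 & h2) | (h1 & h2)]].
    - rewrite quadrant_sdist_lower_left by (simpl; lra). lra.
    - rewrite quadrant_sdist_left by (simpl; lra). simpl. lra.
    - rewrite quadrant_sdist_below by (simpl; lra). simpl. lra. }
  destruct (excluded_middle_informative _) as [h|n3].
  { destruct h as (h1 & h2 & h3).
    rewrite quadrant_sdist_lower_left by (simpl; lra).
    rewrite ramp_linear by lra. reflexivity. }
  destruct (excluded_middle_informative _) as [h|n4].
  { destruct p as [p1 p2]. destruct h as (h1 & h2); simpl in *.
    rewrite quadrant_sdist_left by (simpl; lra). simpl.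
    rewrite ramp_linear by lra. f_equal. lra. }
  destruct (excluded_middle_informative _) as [h|n5].
  { destruct p as [p1 p2]. destruct h as (h1 & h2); simpl in *.
    rewrite quadrant_sdist_below by (simpl; lra). simpl.
    rewrite ramp_linear by lra. f_equal. lra. }
  exfalso. unfold dom in hp. tauto.
Qed.

Lemma follows_horizontal (y s : R) : a2 T2 tau < y -> 0 < s ->
  follows (along (a1 T1 tau, y) (1, 0)) s.
Proof.
  intros hy hs. centre_facts.
  assert (hd : dom T1 T2 tau (along (a1 T1 tau, y) (1, 0) s)).
  { unfold dom, S11, St1, S01, along; simpl.
    destruct (Rlt_dec s (Rad1 tau)); [|destruct (Rle_dec s (Rad2 tau))]; lra. }
  split; [exact hd|]. rewrite f_tau_ramp by exact hd. f_equal.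
  unfold along; rewrite quadrant_sdist_left; simpl; lra.
Qed.

Lemma follows_vertical (x s : R) : a1 T1 tau < x -> 0 < s ->
  follows (along (x, a2 T2 tau) (0, 1)) s.
Proof.
  intros hx hs. centre_facts.
  assert (hd : dom T1 T2 tau (along (x, a2 T2 tau) (0, 1) s)).
  { unfold dom, S12, St2, S02, along; simpl.
    destruct (Rlt_dec s (Rad1 tau)); [|destruct (Rle_dec s (Rad2 tau))]; lra. }
  split; [exact hd|]. rewrite f_tau_ramp by exact hd. f_equal.
  unfold along; rewrite quadrant_sdist_below; simpl; lra.
Qed.

Lemma follows_ray (z : pt) (s : R) : 0 < dist2 z (c0 T1 T2 tau) ->
  fst z <= a1 T1 tau -> snd z <= a2 T2 tau -> Rad1 tau <= s ->
  follows (along (c0 T1 T2 tau) (ray_dir (c0 T1 T2 tau) z)) s.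
Proof.
  intros hz h1 h2 hs. centre_facts.
  destruct (along_ray_lower_left (c0 T1 T2 tau) z hz s h1 h2 ltac:(lra)) as [hp1 hp2].
  pose proof (dist2_along_ray_centre (c0 T1 T2 tau) z hz s ltac:(lra)) as hdist.
  assert (hd : dom T1 T2 tau (along (c0 T1 T2 tau) (ray_dir (c0 T1 T2 tau) z) s)).
  { change (fst (c0 T1 T2 tau)) with (a1 T1 tau) in hp1.
    change (snd (c0 T1 T2 tau)) with (a2 T2 tau) in hp2.
    unfold dom, Sta, S0a. destruct (Rle_dec s (Rad2 tau)).
    - do 7 right; left. lra.
    - do 4 right; left. lra. }
  split; [exact hd|]. rewrite f_tau_ramp, quadrant_sdist_lower_left, hdist by assumption.
  reflexivity.
Qed.

Lemma Bstar_along (b v : pt) (s0 : R) (z : pt) : fst v ^ 2 + snd v ^ 2 = 1 ->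
  along b v s0 = z -> dom T1 T2 tau z -> sd z = s0 ->
  follows (along b v) (Rad1 tau) -> follows (along b v) (Rad1 tau + tau) ->
  Bstar T1 T2 tau gamma z = Finite (ramp_sens (sd z)).
Proof.
  intros hv hz hdz hs hr hrt. subst z. rewrite hs. unfold Bstar.
  apply smooth_sens_eq_ramp with (phi := sd); auto.
  - apply f_tau_ramp.
  - apply quadrant_sdist_lipschitz.
  - intros s t. apply dist2_along, hv.
  - split; [exact hdz|]. rewrite f_tau_ramp, hs by exact hdz. reflexivity.
Qed.

Lemma dist2_c0_pos (z : pt) : dom T1 T2 tau z -> 0 < dist2 z (c0 T1 T2 tau).
Proof.
  intros hz. centre_facts. apply Rnot_le_lt. intros hle.
  pose proof (dist2_fst_le z (c0 T1 T2 tau)). pose proof (dist2_snd_le z (c0 T1 T2 tau)).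
  pose proof (sqrt_pos ((fst z - a1 T1 tau) ^ 2 + (snd z - a2 T2 tau) ^ 2)).
  unfold dom, S1a, S11, S12, S13, S0a, S01, S02, Sta, St1, St2 in hz. simpl in *.
  fold (dist2 z (c0 T1 T2 tau)) in *. split_Rabs; intuition lra.
Qed.

Lemma Bstar_horizontal (z : pt) : dom T1 T2 tau z -> a2 T2 tau < snd z ->
  sd z = a1 T1 tau - fst z -> Bstar T1 T2 tau gamma z = Finite (ramp_sens (sd z)).
Proof.
  intros hz h2 hs. destruct z as [z1 z2]; simpl in *.
  apply Bstar_along with (b := (a1 T1 tau, z2)) (v := (1, 0)) (s0 := a1 T1 tau - z1); auto;
    try (apply follows_horizontal; centre_facts; lra).
  - simpl. ring.
  - unfold along; simpl. f_equal; ring.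
Qed.

Lemma Bstar_vertical (z : pt) : dom T1 T2 tau z -> a1 T1 tau < fst z ->
  sd z = a2 T2 tau - snd z -> Bstar T1 T2 tau gamma z = Finite (ramp_sens (sd z)).
Proof.
  intros hz h1 hs. destruct z as [z1 z2]; simpl in *.
  apply Bstar_along with (b := (z1, a2 T2 tau)) (v := (0, 1)) (s0 := a2 T2 tau - z2); auto;
    try (apply follows_vertical; centre_facts; lra).
  - simpl. ring.
  - unfold along; simpl. f_equal; ring.
Qed.

Lemma Bstar_ray (z : pt) : dom T1 T2 tau z -> fst z <= a1 T1 tau -> snd z <= a2 T2 tau ->
  Bstar T1 T2 tau gamma z = Finite (ramp_sens (sd z)).
Proof.
  intros hz h1 h2. pose proof (dist2_c0_pos z hz) as hd. centre_facts.
  apply Bstar_along with (b := c0 T1 T2 tau) (v := ray_dir (c0 T1 T2 tau) z)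
    (s0 := dist2 z (c0 T1 T2 tau)); auto.
  - apply ray_dir_unit, hd.
  - apply along_ray_dist, hd.
  - apply quadrant_sdist_lower_left; assumption.
  - apply follows_ray; auto; lra.
  - apply follows_ray; auto; lra.
Qed.

Theorem Bstar_eq_sdist (z : pt) : dom T1 T2 tau z ->
  Bstar T1 T2 tau gamma z = Finite (ramp_sens (sd z)).
Proof.
  intros hz. destruct z as [z1 z2].
  destruct (Rle_dec z1 (a1 T1 tau)) as [h1|h1]; destruct (Rle_dec z2 (a2 T2 tau)) as [h2|h2].
  - apply Bstar_ray; assumption.
  - apply Bstar_horizontal; simpl; [assumption | lra |].
    apply quadrant_sdist_left; simpl; lra.
  - apply Bstar_vertical; simpl; [assumption | lra |].
    apply quadrant_sdist_below; simpl; lra.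
  - assert (hs : sd (z1, z2) = Rmax (a1 T1 tau - z1) (a2 T2 tau - z2))
      by (apply quadrant_sdist_inside; simpl; lra).
    destruct (Rle_dec (a2 T2 tau - z2) (a1 T1 tau - z1)).
    + apply Bstar_horizontal; simpl; [assumption | lra |]. rewrite hs. apply Rmax_left. lra.
    + apply Bstar_vertical; simpl; [assumption | lra |]. rewrite hs. apply Rmax_right. lra.
Qed.

Lemma Bstar_S01 (z : pt) : S01 T1 T2 tau z -> Bstar T1 T2 tau gamma z =
  Finite (Rmax (1 / (T1 + tau/2 - fst z)) (1 / tau * exp (- gamma * (T1 - tau/2 - fst z)))).
Proof.
  intros hz. rewrite Bstar_eq_sdist by (unfold dom; tauto). centre_facts.
  destruct z as [z1 z2], hz as [h1 h2]; simpl in *.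
  rewrite quadrant_sdist_left by (simpl; lra). simpl.
  rewrite ramp_smooth_sens_bottom by lra. unfold ramp_decay_bottom.
  replace (a1 T1 tau - z1 - Rad1 tau) with (T1 + tau / 2 - z1) by lra.
  replace (a1 T1 tau - z1 - (Rad1 tau + tau)) with (T1 - tau / 2 - z1) by lra.
  reflexivity.
Qed.

Lemma Bstar_S02 (z : pt) : S02 T1 T2 tau z -> Bstar T1 T2 tau gamma z =
  Finite (Rmax (1 / (T2 + tau/2 - snd z)) (1 / tau * exp (- gamma * (T2 - tau/2 - snd z)))).
Proof.
  intros hz. rewrite Bstar_eq_sdist by (unfold dom; tauto). centre_facts.
  destruct z as [z1 z2], hz as [h1 h2]; simpl in *.
  rewrite quadrant_sdist_below by (simpl; lra). simpl.
  rewrite ramp_smooth_sens_bottom by lra. unfold ramp_decay_bottom.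
  replace (a2 T2 tau - z2 - Rad1 tau) with (T2 + tau / 2 - z2) by lra.
  replace (a2 T2 tau - z2 - (Rad1 tau + tau)) with (T2 - tau / 2 - z2) by lra.
  reflexivity.
Qed.

Lemma Bstar_S0a (z : pt) : S0a T1 T2 tau z -> Bstar T1 T2 tau gamma z =
  Finite (Rmax (1 / (dist2 z (c0 T1 T2 tau) - Rad1 tau))
               (1 / tau * exp (- gamma * (dist2 z (c0 T1 T2 tau) - Rad2 tau)))).
Proof.
  intros hz. rewrite Bstar_eq_sdist by (unfold dom; tauto). centre_facts.
  destruct hz as (h1 & h2 & h3).
  rewrite quadrant_sdist_lower_left by (simpl; lra).
  rewrite ramp_smooth_sens_bottom by lra. reflexivity.
Qed.

Lemma Bstar_S11 (z : pt) : S11 T1 T2 tau z -> Bstar T1 T2 tau gamma z =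
  Finite (Rmax (1 / (fst z - (T1 - tau/2))) (1 / tau * exp (- gamma * (fst z - (T1 + tau/2))))).
Proof.
  intros hz. rewrite Bstar_eq_sdist by (unfold dom; tauto). centre_facts.
  destruct z as [z1 z2], hz as [h1 h2]; simpl in *.
  rewrite quadrant_sdist_left by (simpl; lra). simpl.
  rewrite ramp_smooth_sens_top by lra. unfold ramp_decay_top.
  replace (Rad1 tau + tau - (a1 T1 tau - z1)) with (z1 - (T1 - tau / 2)) by lra.
  replace (Rad1 tau - (a1 T1 tau - z1)) with (z1 - (T1 + tau / 2)) by lra.
  reflexivity.
Qed.

Lemma Bstar_S12 (z : pt) : S12 T1 T2 tau z -> Bstar T1 T2 tau gamma z =
  Finite (Rmax (1 / (snd z - (T2 - tau/2))) (1 / tau * exp (- gamma * (snd z - (T2 + tau/2))))).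
Proof.
  intros hz. rewrite Bstar_eq_sdist by (unfold dom; tauto). centre_facts.
  destruct z as [z1 z2], hz as [h1 h2]; simpl in *.
  rewrite quadrant_sdist_below by (simpl; lra). simpl.
  rewrite ramp_smooth_sens_top by lra. unfold ramp_decay_top.
  replace (Rad1 tau + tau - (a2 T2 tau - z2)) with (z2 - (T2 - tau / 2)) by lra.
  replace (Rad1 tau - (a2 T2 tau - z2)) with (z2 - (T2 + tau / 2)) by lra.
  reflexivity.
Qed.

Lemma Bstar_S13 (z : pt) : S13 T1 T2 tau z -> Bstar T1 T2 tau gamma z =
  Finite (Rmax (Rmax (1 / (fst z - (T1 - tau/2)))
                     (1 / tau * exp (- gamma * (fst z - (T1 + tau/2)))))
               (Rmax (1 / (snd z - (T2 - tau/2)))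
                     (1 / tau * exp (- gamma * (snd z - (T2 + tau/2)))))).
Proof.
  intros hz. rewrite Bstar_eq_sdist by (unfold dom; tauto). centre_facts.
  destruct z as [z1 z2], hz as [h1 h2]; simpl in *.
  rewrite quadrant_sdist_inside by (simpl; lra). simpl.
  rewrite ramp_smooth_sens_top by (solve [lra | apply Rmax_lub; lra]).
  rewrite ramp_decay_top_Rmax by lra. unfold ramp_decay_top.
  replace (Rad1 tau + tau - (a1 T1 tau - z1)) with (z1 - (T1 - tau / 2)) by lra.
  replace (Rad1 tau - (a1 T1 tau - z1)) with (z1 - (T1 + tau / 2)) by lra.
  replace (Rad1 tau + tau - (a2 T2 tau - z2)) with (z2 - (T2 - tau / 2)) by lra.
  replace (Rad1 tau - (a2 T2 tau - z2)) with (z2 - (T2 + tau / 2)) by lra.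
  reflexivity.
Qed.

Lemma Bstar_S1a (z : pt) : S1a T1 T2 tau z -> Bstar T1 T2 tau gamma z =
  Finite (Rmax (1 / (Rad2 tau - dist2 z (c0 T1 T2 tau)))
               (1 / tau * exp (- gamma * (Rad1 tau - dist2 z (c0 T1 T2 tau))))).
Proof.
  intros hz. rewrite Bstar_eq_sdist by (unfold dom; tauto). centre_facts.
  destruct hz as ((h1 & h2) & (h3 & h4) & h5).
  rewrite quadrant_sdist_lower_left by (simpl; lra).
  rewrite ramp_smooth_sens_top by lra. reflexivity.
Qed.

Lemma Bstar_transition (z : pt) : St1 T1 T2 tau z \/ St2 T1 T2 tau z \/ Sta T1 T2 tau z ->
  Bstar T1 T2 tau gamma z = Finite (1 / tau).
Proof.
  intros hz. rewrite Bstar_eq_sdist by (unfold dom; tauto). centre_facts.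
  apply f_equal, ramp_smooth_sens_linear; [exact htau|].
  destruct z as [z1 z2]; destruct hz as [(h1 & h2) | [(h1 & h2) | (h1 & h2 & h3)]]; simpl in *.
  - rewrite quadrant_sdist_left by (simpl; lra). simpl. lra.
  - rewrite quadrant_sdist_below by (simpl; lra). simpl. lra.
  - rewrite quadrant_sdist_lower_left by (simpl; lra). lra.
Qed.

End Regions.

Theorem mainTheorem10 (T1 T2 tau gamma : R)
  (hT1 : 0 < T1) (hT2 : 0 < T2) (htau0 : 0 < tau)
  (htau1 : tau < 2 * Rmin T1 T2) (hgamma : 0 < gamma) :
  let B := Bstar T1 T2 tau gamma in
  let d := fun z => dist2 z (c0 T1 T2 tau) in
  (forall z, S01 T1 T2 tau z -> B z =
     Finite (Rmax (1 / (T1 + tau/2 - fst z))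
                  (1 / tau * exp (- gamma * (T1 - tau/2 - fst z))))) /\
  (forall z, S02 T1 T2 tau z -> B z =
     Finite (Rmax (1 / (T2 + tau/2 - snd z))
                  (1 / tau * exp (- gamma * (T2 - tau/2 - snd z))))) /\
  (forall z, S0a T1 T2 tau z -> B z =
     Finite (Rmax (1 / (d z - Rad1 tau))
                  (1 / tau * exp (- gamma * (d z - Rad2 tau))))) /\
  (forall z, S11 T1 T2 tau z -> B z =
     Finite (Rmax (1 / (fst z - (T1 - tau/2)))
                  (1 / tau * exp (- gamma * (fst z - (T1 + tau/2)))))) /\
  (forall z, S12 T1 T2 tau z -> B z =
     Finite (Rmax (1 / (snd z - (T2 - tau/2)))
                  (1 / tau * exp (- gamma * (snd z - (T2 + tau/2)))))) /\
  (forall z, S13 T1 T2 tau z -> B z =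
     Finite (Rmax (Rmax (1 / (fst z - (T1 - tau/2)))
                        (1 / tau * exp (- gamma * (fst z - (T1 + tau/2)))))
                  (Rmax (1 / (snd z - (T2 - tau/2)))
                        (1 / tau * exp (- gamma * (snd z - (T2 + tau/2))))))) /\
  (forall z, S1a T1 T2 tau z -> B z =
     Finite (Rmax (1 / (Rad2 tau - d z))
                  (1 / tau * exp (- gamma * (Rad1 tau - d z))))) /\
  (forall z, St1 T1 T2 tau z \/ St2 T1 T2 tau z \/ Sta T1 T2 tau z ->
     B z = Finite (1 / tau)).
Proof.
  intros B d. repeat split; intros z hz.
  - apply Bstar_S01; assumption.
  - apply Bstar_S02; assumption.
  - apply Bstar_S0a; assumption.
  - apply Bstar_S11; assumption.
  - apply Bstar_S12; assumption.
  - apply Bstar_S13; assumption.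
  - apply Bstar_S1a; assumption.
  - apply Bstar_transition; assumption.
Qed.
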